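(* Suppose that for every connected bipartite graph $H$ of even order and every weight function $w\colon V(H)\to\{0,1\}$, Alice wins the graph-grabbing game on $(H,w)$. Then for every connected graph $G$ of even order that has no induced subgraph isomorphic to a corona of an odd cycle and a point, and every weight function $w\colon V(G)\to\{0,1\}$, Alice wins the graph-grabbing game on $(G,w)$.
   Context: The graph-grabbing game is played by two players, Alice and Bob, on a connected graph $G$ with a weight function $w\colon V(G)\to\mathbb{R}_{\ge 0}$. Starting with Alice, the players alternately remove one vertex of the current graph, subject to the rule that the vertices remaining after each removal induce a connected subgraph of $G$ (the empty set counts as allowed at the end). When all vertices have been removed, each player's score is the total weight of the vertices that player removed; both players aim to maximise their own score. Alice is said to win on $(G,w)$ if she has a strategy guaranteeing her a score of at least half of $\sum_{v\in V(G)} w(v)$. The corona of an odd cycle and a point is the graph obtained from a cycle $x_1x_2\cdots x_r$ with $r\ge 3$ odd by adding $r$ new vertices $y_1,\dots,y_r$, with $y_i$ adjacent only to $x_i$ (i.e. each cycle vertex receives one pendant leaf). *)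

From mathcomp Require Import all_boot.
Set Implicit Arguments. Unset Strict Implicit. Unset Printing Implicit Defensive.

Definition simple_graph (T : finType) (adj : rel T) : Prop :=
  symmetric adj /\ irreflexive adj.

Definition induced_rel (T : finType) (adj : rel T) (S : {set T}) : rel T :=
  [rel x y | [&& adj x y, x \in S & y \in S]].

(* S induces a connected subgraph (the empty set counts as connected). *)
Definition connected_set (T : finType) (adj : rel T) (S : {set T}) : Prop :=
  forall x y, x \in S -> y \in S -> connect (induced_rel adj S) x y.

Definition connected_graph (T : finType) (adj : rel T) : Prop :=
  connected_set adj [set: T].

Definition bipartite (T : finType) (adj : rel T) : Prop :=
  exists f : T -> bool, forall x y, adj x y -> f x != f y.

Definition legal_move (T : finType) (adj : rel T) (S : {set T}) (v : T) : Prop :=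
  v \in S /\ connected_set adj (S :\ v).

(* [alice_wins_from adj w S turn a]: from position with remaining vertices S,
   Alice to move iff [turn], Alice having collected [a] so far, Alice has a
   strategy guaranteeing a final score of at least half the total weight. *)
Inductive alice_wins_from (T : finType) (adj : rel T) (w : T -> nat)
  : {set T} -> bool -> nat -> Prop :=
| awf_end : forall b a, 2 * a >= \sum_(v : T) w v ->
    alice_wins_from adj w set0 b a
| awf_alice : forall S a v, S != set0 -> legal_move adj S v ->
    alice_wins_from adj w (S :\ v) false (a + w v) ->
    alice_wins_from adj w S true a
| awf_bob : forall S a, S != set0 ->
    (forall v, legal_move adj S v -> alice_wins_from adj w (S :\ v) true a) ->
    alice_wins_from adj w S false a.

Definition alice_wins (T : finType) (adj : rel T) (w : T -> nat) : Prop :=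
  alice_wins_from adj w [set: T] true 0.

(* Corona of the cycle x_0 ... x_{r-1} and a point:
   vertices inl i = x_i, inr i = y_i. *)
Definition cycle_adj (r : nat) (i j : 'I_r) : bool :=
  (val j == (val i).+1 %% r) || (val i == (val j).+1 %% r).

Definition corona_adj (r : nat) : rel ('I_r + 'I_r) :=
  fun a b => match a, b with
  | inl i, inl j => cycle_adj i j
  | inl i, inr j => i == j
  | inr i, inl j => i == j
  | inr _, inr _ => false
  end.

Definition has_induced_odd_corona (T : finType) (adj : rel T) : Prop :=
  exists r : nat, [/\ 3 <= r, odd r &
    exists f : 'I_r + 'I_r -> T,
      injective f /\ forall a b, adj (f a) (f b) = corona_adj a b].

From mathcomp Require Import all_boot zify.
From Stdlib Require Import Classical.
Set Implicit Arguments. Unset Strict Implicit. Unset Printing Implicit Defensive.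

(* Alice keeps the invariant that, with Alice to move on an even connected
   remaining set S, she already holds at least half of the removed weight.
   If S induces a bipartite graph she switches to the strategy given by the
   hypothesis on that subgraph. Otherwise S contains an odd closed walk, hence
   an induced odd cycle x_1 ... x_r. If every legal move had at most one
   neighbour in S, each x_i would be a cut vertex of S, and a neighbour y_i of
   x_i in a component of S - x_i avoiding the rest of the cycle would make the
   x_i and y_i an induced corona. So some legal move v has two neighbours in
   S, and then every legal reply of Bob after v was already legal before v.
   Alice therefore takes a legal vertex of weight 1 if there is one, and v
   otherwise: either way Bob's reply weighs no more than her move. *)

Lemma homo_connect (T1 T2 : finType) (e1 : rel T1) (e2 : rel T2) (f : T1 -> T2) :
  (forall x y, e1 x y -> e2 (f x) (f y)) ->
  forall x y, connect e1 x y -> connect e2 (f x) (f y).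
Proof.
move=> f_homo x _ /connectP [p e1_p ->]; elim: p x e1_p => [|z p IHp] x /=.
  by rewrite connect0.
by case/andP=> /f_homo/connect1 e2_xz /IHp; apply: connect_trans.
Qed.

Section InducedConnectivity.

Variables (T : finType) (adj : rel T).
Hypothesis adj_sym : symmetric adj.

Lemma induced_connect_sym (S : {set T}) : connect_sym (induced_rel adj S).
Proof.
by apply: sym_connect_sym => x y; rewrite /induced_rel /= adj_sym [(x \in S) && _]andbC.
Qed.

Lemma connect_induced_walk (S : {set T}) (g : nat -> T) a b :
  a <= b -> (forall k, a <= k < b -> adj (g k) (g k.+1)) ->
  (forall k, a <= k <= b -> g k \in S) ->
  connect (induced_rel adj S) (g a) (g b).
Proof.
elim: b => [|b IHb] le_ab g_step g_in; first by rewrite (_ : a = 0) ?connect0; lia.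
have [le_ab'|] := leqP a b; last by move=> lt_ba; rewrite (_ : a = b.+1) ?connect0; lia.
apply: connect_trans (IHb le_ab' _ _) (connect1 _).
- by move=> k /andP [? ?]; apply: g_step; lia.
- by move=> k /andP [? ?]; apply: g_in; lia.
by rewrite /induced_rel /= g_step ?g_in //; lia.
Qed.

Lemma connected_setU1 (S : {set T}) z t :
  connected_set adj S -> t \in S -> adj z t -> connected_set adj (z |: S).
Proof.
move=> connS tS adj_zt.
have S_sub x y : connect (induced_rel adj S) x y -> connect (induced_rel adj (z |: S)) x y.
  apply: (homo_connect (f := id)) => {}x {}y /and3P [adj_xy xS yS].
  by rewrite /induced_rel /= adj_xy !inE xS yS !orbT.
have z_t : connect (induced_rel adj (z |: S)) z t.
  by apply: connect1; rewrite /induced_rel /= adj_zt !inE eqxx tS orbT.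
have z_S y : y \in S -> connect (induced_rel adj (z |: S)) z y.
  by move=> yS; apply: connect_trans z_t (S_sub _ _ (connS _ _ tS yS)).
move=> x y; rewrite !inE => /orP [/eqP ->|xS] /orP [/eqP ->|yS].
- exact: connect0.
- exact: z_S.
- by rewrite induced_connect_sym; apply: z_S.
- exact: S_sub (connS _ _ xS yS).
Qed.

Lemma induced_connect_exit (S : {set T}) x z :
  z \in S :\ x -> connect (induced_rel adj S) z x ->
  exists2 y, adj y x & (y \in S :\ x) && connect (induced_rel adj (S :\ x)) z y.
Proof.
move=> zSx /connectP [p]; elim: p z zSx => [|u p IHp] z zSx /=.
  by move=> _ Ezx; move: zSx; rewrite Ezx setD11.
case/andP=> /and3P [adj_zu _ uS] path_p last_p.
have [Eux|neq_ux] := eqVneq u x; first by subst u; exists z; rewrite ?adj_zu ?zSx ?connect0.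
have uSx : u \in S :\ x by rewrite !inE neq_ux.
have [y adj_yx /andP [ySx u_y]] := IHp u uSx path_p last_p.
exists y; rewrite // ySx (connect_trans _ u_y) // connect1 //.
by rewrite /induced_rel /= adj_zu zSx.
Qed.

Lemma cut_vertex_neighbour (S : {set T}) x a :
  connected_set adj S -> x \in S -> ~ connected_set adj (S :\ x) ->
  exists y, [/\ y \in S :\ x, adj y x & ~~ connect (induced_rel adj (S :\ x)) a y].
Proof.
move=> connS xS cut_x.
have [z zSx a_z] : exists2 z, z \in S :\ x & ~~ connect (induced_rel adj (S :\ x)) a z.
  apply: NNPP => all_a; apply: cut_x => p q pSx qSx.
  have a_all r : r \in S :\ x -> connect (induced_rel adj (S :\ x)) a r.
    by move=> rSx; apply: NNPP => /negP a_r; apply: all_a; exists r.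
  by apply: connect_trans (a_all _ qSx); rewrite induced_connect_sym a_all.
have zS : z \in S by case/setD1P: zSx.
have [y adj_yx /andP [ySx z_y]] := induced_connect_exit zSx (connS _ _ zS xS).
exists y; split=> //; apply: contra a_z => a_y.
by apply: connect_trans a_y _; rewrite induced_connect_sym.
Qed.

End InducedConnectivity.

Section OddClosedWalks.

Variables (T : finType) (adj : rel T).

Definition closed_walk (S : {set T}) (L : nat) (g : nat -> T) : Prop :=
  g L = g 0 /\ forall k, k < L -> adj (g k) (g k.+1) && (g k \in S).

Definition induced_cycle (L : nat) (g : nat -> T) : Prop :=
  (forall i j, i < j < L -> g i != g j) /\
  (forall i j, i < j < L -> adj (g i) (g j) -> j = i.+1 \/ (i = 0 /\ j = L.-1)).

(* Cutting a closed walk at two equal (d = false) or adjacent (d = true)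
   positions i < j yields two closed walks with total length L + 2 d. *)
Lemma closed_walk_shortcut S L g i j (d : bool) :
  closed_walk S L g -> i < j < L ->
  (if d then adj (g i) (g j) && adj (g j) (g i) else g i == g j) ->
  closed_walk S (j - i + d) (fun k => if k <= j - i then g (i + k) else g i) /\
  closed_walk S (L - (j - i) + d) (fun k => if k <= i then g k else g (k - i - d + j)).
Proof.
move=> [gL g_walk] /andP [lt_ij lt_jL] g_ij.
have g_in k : k < L -> g k \in S by move/g_walk/andP=> [].
have g_step k : k < L -> adj (g k) (g k.+1) by move/g_walk/andP=> [].
case: d g_ij => /= [/andP [adj_ij adj_ji] | /eqP eq_ij].
  have g_adj a b : a < L -> b = a.+1 \/ a = i /\ b = j \/ a = j /\ b = i ->
      adj (g a) (g b).
    by move=> lt_aL [-> | [[-> ->] | [-> ->]]] //; apply: g_step.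
  split; split=> [|k lt_k]; repeat case: ifP => ?;
    by rewrite ?g_in ?g_adj -?gL //; try congr g; lia.
have g_adj a b : a < L -> b = a.+1 \/ a = i /\ b = j.+1 -> adj (g a) (g b).
  by move=> lt_aL [-> | [-> ->]]; rewrite ?eq_ij g_step.
split; split=> [|k lt_k]; repeat case: ifP => ?;
  by rewrite ?addn0 ?leq0n ?subnKC ?g_in ?g_adj -?gL ?eq_ij //; try congr g; lia.
Qed.

Lemma odd_closed_walk_induced_cycle S L g : symmetric adj ->
  odd L -> closed_walk S L g ->
  exists L' g', [/\ odd L', closed_walk S L' g' & induced_cycle L' g'].
Proof.
move=> adj_sym; have [n] := ubnP L; elim: n => // n IHn in L g *.
rewrite ltnS => le_Ln oddL walk_g.
have [cycle_g | not_cycle] := classic (induced_cycle L g); first by exists L, g.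
have [i [j [d [lt_ijL g_ij short_ij]]]] : exists i j (d : bool),
    [/\ i < j < L, if d then adj (g i) (g j) && adj (g j) (g i) else g i == g j
      & d -> 1 < j - i < L.-1].
  apply: NNPP => no_ij; apply: not_cycle; split=> i j lt_ijL.
    apply: contra_notN no_ij => /eqP eq_ij; exists i, j, false.
    by rewrite eq_ij eqxx.
  move=> adj_ij; apply: NNPP => not_consecutive; apply: no_ij; exists i, j, true.
  by rewrite adj_ij -adj_sym adj_ij; split=> //; lia.
have [walk_in walk_out] := closed_walk_shortcut walk_g lt_ijL g_ij.
have : odd (j - i + d) || odd (L - (j - i) + d).
  move: oddL; rewrite -[odd L]addbF -(odd_double d) -oddD.
  have -> : L + d.*2 = j - i + d + (L - (j - i) + d) by rewrite -addnn; lia.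
  by rewrite oddD; case: (odd (j - i + d)); case: (odd _).
have [short_in short_out] : j - i + d < n /\ L - (j - i) + d < n.
  by move: short_ij; case: d {g_ij walk_in walk_out} => /=; lia.
by case/orP=> [odd_in | odd_out];
  [apply: IHn _ _ short_in odd_in walk_in | apply: IHn _ _ short_out odd_out walk_out].
Qed.

Definition bipartite_set (S : {set T}) : Prop :=
  exists f : T -> bool, forall x y, x \in S -> y \in S -> adj x y -> f x != f y.

(* The bipartite double cover of the subgraph induced on S. *)
Definition parity_cover (S : {set T}) : rel (T * bool) :=
  fun p q => [&& adj p.1 q.1, p.1 \in S, q.1 \in S & q.2 == ~~ p.2].

Lemma parity_cover_path S x p :
  path (parity_cover S) x p -> (last x p).2 = x.2 (+) odd (size p).
Proof.
elim: p x => [|y p IHp] x /=; first by rewrite addbF.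
rewrite {1}/parity_cover => /andP [/and4P [_ _ _ /eqP y2] /IHp ->].
by rewrite y2; case: x.2; case: odd.
Qed.

Lemma odd_closed_walk_of_parity_cover S s :
  connect (parity_cover S) (s, false) (s, true) ->
  exists L g, odd L /\ closed_walk S L g.
Proof.
case/connectP=> p path_p last_p.
have := parity_cover_path path_p; rewrite -last_p /= => odd_p.
pose g k := (nth (s, false) ((s, false) :: p) k).1.
exists (size p), g; split; first by rewrite -odd_p.
split.
  by rewrite /g -last_nth -last_p.
move=> k lt_k; have := pathP (s, false) path_p k lt_k.
by case/and4P=> adj_k in_k _ _; rewrite /g adj_k in_k.
Qed.

Lemma bipartite_of_parity_cover (S : {set T}) s :
  symmetric adj -> s \in S -> connected_set adj S ->
  ~~ connect (parity_cover S) (s, false) (s, true) -> bipartite_set S.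
Proof.
move=> adj_sym sS connS no_odd; set e := parity_cover S.
have e_sym : connect_sym e.
  apply: sym_connect_sym => [[x b]] [y c]; rewrite /e /parity_cover /= adj_sym.
  by apply/and4P/and4P=> -[-> -> -> /eqP ->]; rewrite ?negbK.
have e_flip x y : connect e x y -> connect e (x.1, ~~ x.2) (y.1, ~~ y.2).
  apply: (homo_connect (f := fun p => (p.1, ~~ p.2))).
  move=> [a b] [c d] /and4P [/= adj_ac aS cS /eqP ->].
  by rewrite /e /parity_cover /= adj_ac aS cS eqxx.
have one_side x b : connect e (s, false) (x, b) -> ~~ connect e (s, false) (x, ~~ b).
  move=> s_xb; apply: contra no_odd => s_xnb.
  apply: connect_trans s_xb _; rewrite e_sym.
  by have /= := e_flip _ _ s_xnb; rewrite negbK.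
have lift x : x \in S -> exists b, connect e (s, false) (x, b).
  move=> xS; case/connectP: (connS _ _ sS xS) => p + ->.
  elim/last_ind: p => [|p y IHp] /=; first by exists false; apply: connect0.
  rewrite rcons_path last_rcons => /andP [/IHp [b s_b] /and3P [adj_py pS yS]].
  exists (~~ b); apply: connect_trans s_b (connect1 _).
  by rewrite /e /parity_cover /= adj_py pS yS eqxx.
exists (fun x => connect e (s, false) (x, false)) => x y xS yS adj_xy.
have [b s_xb] := lift x xS.
have s_ynb : connect e (s, false) (y, ~~ b).
  by apply: connect_trans s_xb (connect1 _); rewrite /e /parity_cover /= adj_xy xS yS eqxx.
case: b s_xb s_ynb => s_x s_y; first by rewrite s_y (negbTE (one_side _ _ s_x)).
by rewrite s_x; apply: one_side s_y.
Qed.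

Lemma bipartite_setVodd_closed_walk (S : {set T}) s :
  symmetric adj -> s \in S -> connected_set adj S ->
  bipartite_set S \/ exists L g, odd L /\ closed_walk S L g.
Proof.
move=> adj_sym sS connS.
have [odd_cover | no_odd] := boolP (connect (parity_cover S) (s, false) (s, true)).
  by right; apply: odd_closed_walk_of_parity_cover odd_cover.
by left; apply: bipartite_of_parity_cover no_odd.
Qed.

End OddClosedWalks.

Lemma modn_succ i L : i < L -> i.+1 %% L = if i.+1 == L then 0 else i.+1.
Proof. by move=> lt_iL; case: eqP => [-> | ?]; rewrite ?modnn ?modn_small //; lia. Qed.

Section CoronaOfCutCycle.

Variables (T : finType) (adj : rel T) (S : {set T}) (L : nat) (g : nat -> T).
Hypotheses (adj_sym : symmetric adj) (adj_irr : irreflexive adj).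
Hypotheses (oddL : odd L) (walk_g : closed_walk adj S L g).
Hypothesis cycle_g : induced_cycle adj L g.

Lemma cycle_in k : k < L -> g k \in S.
Proof. by case: walk_g => _ /[apply] /andP []. Qed.

Lemma cycle_step k : k < L -> adj (g k) (g k.+1).
Proof. by case: walk_g => _ /[apply] /andP []. Qed.

Lemma cycle_length_ge3 : 3 <= L.
Proof.
case: L oddL walk_g cycle_step => [|[|[|n]]] // _ [gL _] /(_ 0 isT).
by rewrite gL adj_irr.
Qed.

Lemma cycle_inj i j : i < L -> j < L -> g i = g j -> i = j.
Proof.
case: cycle_g => g_uniq _ lt_iL lt_jL eq_g.
case: (ltngtP i j) => // [lt_ij | lt_ji].
  by move: (g_uniq i j); rewrite lt_ij lt_jL eq_g eqxx => /(_ isT).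
by move: (g_uniq j i); rewrite lt_ji lt_iL eq_g eqxx => /(_ isT).
Qed.

Lemma cycle_adjE (i j : 'I_L) : adj (g i) (g j) = cycle_adj i j.
Proof.
have step_adj a b : a < L -> b = a.+1 %% L -> adj (g a) (g b).
  move=> lt_aL; rewrite modn_succ // => ->; case: eqP => [Ea | _]; last exact: cycle_step.
  by case: walk_g => gL _; rewrite -gL -Ea; apply: cycle_step.
apply/idP/idP => [adj_ij | /orP [/eqP E | /eqP E]];
  [| exact: step_adj | by rewrite adj_sym step_adj].
have chord (a b : 'I_L) : a < b -> adj (g a) (g b) -> cycle_adj a b.
  move=> lt_ab /(cycle_g.2 a b); rewrite lt_ab ltn_ord => /(_ isT).
  move: (ltn_ord b); rewrite /cycle_adj /= !modn_succ //.
  by case: (a.+1 =P L); case: (b.+1 =P L); lia.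
case: (ltngtP i j) => [lt_ij | lt_ji | /val_inj eq_ij]; first exact: chord.
  by rewrite /cycle_adj orbC; apply: chord; rewrite // adj_sym.
by move: adj_ij; rewrite eq_ij adj_irr.
Qed.

Lemma cycle_neighbours (i : 'I_L) :
  [/\ cycle_adj i (ordS i), cycle_adj i (ord_pred i) & ordS i != ord_pred i].
Proof.
split; first by rewrite /cycle_adj eqxx.
  by rewrite /cycle_adj -[(ord_pred i).+1 %% L]/(val (ordS (ord_pred i))) ord_predK eqxx orbT.
have L3 := cycle_length_ge3; have lt_iL := ltn_ord i.
apply/eqP => /(congr1 (@ordS L)); rewrite ord_predK => /(congr1 val) /=.
rewrite (modn_succ lt_iL); case: eqP => [E | ne_iL]; first by rewrite modn_small; lia.
by rewrite modn_succ; [case: eqP; lia | lia].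
Qed.

Lemma cycle_in_setD1 k i : k < L -> i < L -> k != i -> g k \in S :\ g i.
Proof.
move=> lt_kL lt_iL ne_ki; rewrite !inE cycle_in // andbT.
by apply: contra ne_ki => /eqP /cycle_inj -> //.
Qed.

(* A vertex of the cycle other than g i, to which the rest of the cycle stays
   connected once g i is deleted. *)
Let anchor (i : nat) := g (if i == 0 then L.-1 else 0).

Lemma cycle_connect_anchor (i j : 'I_L) : j != i ->
  connect (induced_rel adj (S :\ g i)) (g j) (anchor i).
Proof.
have [lt_iL lt_jL] := (ltn_ord i, ltn_ord j).
have in_Si k : k < L -> k != i -> g k \in S :\ g i by move=> ? ?; apply: cycle_in_setD1.
have arc a b : a <= b < L -> i < a \/ b < i ->
    connect (induced_rel adj (S :\ g i)) (g a) (g b).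
  move=> /andP [le_ab lt_bL] i_out.
  apply: connect_induced_walk => // k /andP [? ?]; [apply: cycle_step | apply: in_Si]; lia.
move=> ne_ji; rewrite /anchor.
case: (ltngtP j i) => [lt_ji | lt_ij | /val_inj eq_ji]; last by rewrite eq_ji eqxx in ne_ji.
  by rewrite ifN; [rewrite (induced_connect_sym adj_sym); apply: arc; lia | lia].
case: eqP => [i0 | ne_i0]; first by apply: arc; lia.
have L0 : 0 < L by lia.
have closing_edge : adj (g L.-1) (g 0).
  have := @cycle_step L.-1; rewrite prednK // => /(_ (leqnn L)).
  by case: walk_g => ->.
apply: connect_trans (arc j L.-1 _ _) (connect1 _); try lia.
by rewrite /induced_rel /= closing_edge !in_Si //; lia.
Qed.

Hypothesis connS : connected_set adj S.
Hypothesis legal_leaf : forall v, legal_move adj S v ->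
  {in S &, forall a b, adj v a -> adj v b -> a = b}.

Lemma cycle_vertex_cut (i : 'I_L) : ~ connected_set adj (S :\ g i).
Proof.
move=> conn_i; have [adj_S adj_P neq_SP] := cycle_neighbours i.
have := legal_leaf (conj (cycle_in (ltn_ord i)) conn_i)
  (cycle_in (ltn_ord (ordS i))) (cycle_in (ltn_ord (ord_pred i))).
rewrite !cycle_adjE => /(_ adj_S adj_P) /(cycle_inj (ltn_ord _) (ltn_ord _)) eq_SP.
by move: neq_SP; rewrite (val_inj eq_SP) eqxx.
Qed.

Lemma cycle_pendants : exists y : 'I_L -> T, forall i,
  [/\ y i \in S :\ g i, adj (y i) (g i)
    & ~~ connect (induced_rel adj (S :\ g i)) (anchor i) (y i)].
Proof.
have [y y_pendant] := fin_all_exists (fun i : 'I_L => cut_vertex_neighbour adj_sym (anchor i)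
  connS (cycle_in (ltn_ord i)) (@cycle_vertex_cut i)).
by exists y.
Qed.

Section Pendants.

Variable y : 'I_L -> T.
Hypothesis y_pendant : forall i,
  [/\ y i \in S :\ g i, adj (y i) (g i)
    & ~~ connect (induced_rel adj (S :\ g i)) (anchor i) (y i)].

Lemma pendant_adj_cycle (i j : 'I_L) : adj (g j) (y i) = (j == i).
Proof.
have [yi_in adj_yi y_far] := y_pendant i.
have [-> | ne_ji] := eqVneq j i; first by rewrite adj_sym.
apply: contraNF y_far => adj_jy.
rewrite (induced_connect_sym adj_sym).
apply: connect_trans (connect1 _) (cycle_connect_anchor ne_ji).
by rewrite /induced_rel /= adj_sym adj_jy yi_in cycle_in_setD1.
Qed.

Lemma pendant_notin_cycle (i j : 'I_L) : y i != g j.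
Proof.
have [yi_in _ y_far] := y_pendant i.
have [-> | ne_ji] := eqVneq j i; first by apply: contraTneq yi_in => ->; rewrite setD11.
by apply: contraNneq y_far => ->; rewrite (induced_connect_sym adj_sym) cycle_connect_anchor.
Qed.

Lemma pendants_not_adj (i j : 'I_L) : ~~ adj (y i) (y j).
Proof.
have [-> | ne_ij] := eqVneq i j; first by rewrite adj_irr.
have [yi_in adj_yi _] := y_pendant i; have [yj_in _ yj_far] := y_pendant j.
apply: contra yj_far => adj_ij; set e := induced_rel adj (S :\ g j).
have yi_in' : y i \in S :\ g j by rewrite in_setD1 pendant_notin_cycle; case/setD1P: yi_in.
have gi_in : g i \in S :\ g j by rewrite cycle_in_setD1.
have yj_yi : connect e (y j) (y i).
  by rewrite connect1 // /e /induced_rel /= adj_sym adj_ij yj_in.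
have yi_gi : connect e (y i) (g i) by rewrite connect1 // /e /induced_rel /= adj_yi yi_in'.
have gi_anchor := cycle_connect_anchor ne_ij.
by rewrite (induced_connect_sym adj_sym) (connect_trans yj_yi (connect_trans yi_gi gi_anchor)).
Qed.

End Pendants.

Lemma induced_odd_corona_of_cycle : has_induced_odd_corona adj.
Proof.
have [y y_pendant] := cycle_pendants.
have adj_pendant i j := pendant_adj_cycle y_pendant i j.
exists L; split; [exact: cycle_length_ge3 | exact: oddL |].
exists (fun a : 'I_L + 'I_L => match a with inl i => g i | inr i => y i end); split.
  case=> [i | i] [j | j] /= eq_ij.
  - by congr inl; apply/val_inj/(cycle_inj (ltn_ord i) (ltn_ord j)).
  - by move: (pendant_notin_cycle y_pendant j i); rewrite eq_ij eqxx.
  - by move: (pendant_notin_cycle y_pendant i j); rewrite eq_ij eqxx.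
  - by congr inr; apply/eqP; rewrite -adj_pendant -eq_ij adj_sym; case: (y_pendant i).
case=> [i | i] [j | j] /=.
- exact: cycle_adjE.
- by rewrite adj_pendant.
- by rewrite adj_sym adj_pendant eq_sym.
- exact/negbTE/pendants_not_adj.
Qed.

End CoronaOfCutCycle.

Lemma legal_move_two_neighbours (T : finType) (adj : rel T) (S : {set T}) :
  simple_graph adj -> connected_set adj S -> ~ has_induced_odd_corona adj ->
  ~ bipartite_set adj S ->
  exists v, legal_move adj S v /\
    exists a b, [/\ a != b, a \in S, b \in S, adj v a & adj v b].
Proof.
move=> [adj_sym adj_irr] connS no_corona not_bip.
have [S0 | [s sS]] := set_0Vmem S.
  by case: not_bip; exists xpredT => x y; rewrite S0 inE.
have [//|[L [g [oddL walk_g]]]] := bipartite_setVodd_closed_walk adj_sym sS connS.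
have [L' [g' [oddL' walk_g' cycle_g']]] := odd_closed_walk_induced_cycle adj_sym oddL walk_g.
apply: NNPP => no_branch; apply: no_corona.
apply: induced_odd_corona_of_cycle adj_sym adj_irr oddL' walk_g' cycle_g' connS _.
move=> v legal_v a b aS bS adj_va adj_vb; apply: NNPP => /eqP neq_ab.
by apply: no_branch; exists v; split; last by exists a, b.
Qed.

Lemma legal_move_extend (T : finType) (adj : rel T) (S : {set T}) v u t :
  symmetric adj -> v \in S -> legal_move adj (S :\ v) u ->
  t \in S -> t != u -> t != v -> adj v t -> legal_move adj S u.
Proof.
move=> adj_sym vS [/setD1P [neq_uv uS] conn_u] tS neq_tu neq_tv adj_vt.
split=> //; have -> : S :\ u = v |: (S :\ v :\ u).
  apply/setP => x; rewrite !inE; case: (eqVneq x v) => [-> | //].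
  by rewrite eq_sym neq_uv vS.
have tSvu : t \in S :\ v :\ u by rewrite !inE neq_tu neq_tv.
exact (connected_setU1 adj_sym conn_u tSvu adj_vt).
Qed.

Lemma greedy_legal_move (T : finType) (adj : rel T) (w : T -> nat) (S : {set T}) :
  simple_graph adj -> connected_set adj S -> ~ has_induced_odd_corona adj ->
  ~ bipartite_set adj S -> (forall x, w x <= 1) ->
  exists v, legal_move adj S v /\ forall u, legal_move adj (S :\ v) u -> w u <= w v.
Proof.
move=> [adj_sym adj_irr] connS no_corona not_bip w01.
have [[v [legal_v wv1]] | no_heavy] := classic (exists v, legal_move adj S v /\ w v = 1).
  by exists v; split=> // u _; rewrite wv1.
have [v [legal_v [a [b [neq_ab aS bS adj_va adj_vb]]]]] :=
  legal_move_two_neighbours (conj adj_sym adj_irr) connS no_corona not_bip.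
exists v; split=> // u legal_u.
have neq_v x : adj v x -> x != v by apply: contraTneq => ->; rewrite adj_irr.
have [neq_av neq_bv] := (neq_v a adj_va, neq_v b adj_vb).
have legal_uS : legal_move adj S u.
  have [eq_au | neq_au] := eqVneq a u.
    apply: legal_move_extend adj_sym legal_v.1 legal_u bS _ neq_bv adj_vb.
    by rewrite -eq_au eq_sym.
  exact: legal_move_extend adj_sym legal_v.1 legal_u aS neq_au neq_av adj_va.
have := w01 u; have : w u != 1 by apply/eqP => wu1; apply: no_heavy; exists u.
lia.
Qed.

Lemma imsetD1 (aT rT : finType) (f : aT -> rT) (X : {set aT}) v :
  injective f -> f @: (X :\ v) = (f @: X) :\ f v.
Proof.
move=> f_inj; apply/setP => y; rewrite !inE.
apply/imsetP/andP => [[x /setD1P [neq_xv xX] ->] | [neq_yv /imsetP [x xX Ey]]].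
  by rewrite (inj_eq f_inj) neq_xv imset_f.
by exists x; rewrite // !inE xX andbT -(inj_eq f_inj) -Ey.
Qed.

Lemma sum_notin_setD1 (T : finType) (w : T -> nat) (S : {set T}) v : v \in S ->
  \sum_(x | x \notin S :\ v) w x = w v + \sum_(x | x \notin S) w x.
Proof.
move=> vS; rewrite (bigD1 v) ?inE ?eqxx //=; congr (_ + _).
apply: eq_bigl => x; rewrite !inE negb_and negbK.
by case: (eqVneq x v) => [-> | _]; rewrite ?vS ?andbT.
Qed.

Section InducedSubgame.

Variables (T : finType) (adj : rel T) (w : T -> nat) (S : {set T}).

Definition sub_adj : rel {x : T | x \in S} := fun x y => adj (val x) (val y).

Lemma imset_val_setT : val @: [set: {x : T | x \in S}] = S.
Proof.
apply/setP => v; apply/imsetP/idP => [[u _ ->] | vS]; first exact: valP.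
by exists (Sub v vS); rewrite ?inE ?SubK.
Qed.

Lemma connected_set_val (X : {set {x : T | x \in S}}) :
  connected_set adj (val @: X) <-> connected_set sub_adj X.
Proof.
split=> connX x y.
  move=> xX yX; have := connX _ _ (imset_f val xX) (imset_f val yX).
  move/(homo_connect (f := insubd x) (e2 := induced_rel sub_adj X)); rewrite !valKd.
  apply=> a' b' /and3P [adj_ab /imsetP [a aX Ea] /imsetP [b bX Eb]]; subst a' b'.
  by rewrite /induced_rel /sub_adj /= !valKd adj_ab aX bX.
move=> /imsetP [x' xX ->] /imsetP [y' yX ->].
apply: (homo_connect (f := val)) (connX _ _ xX yX) => a b.
by case/and3P => adj_ab aX bX; rewrite /induced_rel /= !imset_f ?andbT.
Qed.

Lemma alice_wins_from_val X b a k :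
  alice_wins_from sub_adj (w \o val) X b a ->
  \sum_(x | x \notin S) w x <= 2 * k ->
  alice_wins_from adj w (val @: X) b (a + k).
Proof.
move=> win_X; elim: win_X k => {X b a}
  [b a end_a | X a v X0 [vX conn_v] _ IH | X a X0 _ IH] k outside_k.
- rewrite imset0; apply: awf_end.
  rewrite (bigID (mem S)) /= mulnDr leq_add //; apply: leq_trans end_a.
  rewrite -[in X in X <= _]imset_val_setT big_imset /=; last by move=> ? ? _ _; apply: val_inj.
  by rewrite (eq_bigl xpredT) // => u; rewrite inE.
- apply: (awf_alice (v := val v)).
  + by case/set0Pn: X0 => x xX; apply/set0Pn; exists (val x); apply: imset_f.
  + split; first exact: imset_f.
    by rewrite -imsetD1; [apply/connected_set_val | apply: val_inj].
  by rewrite addnAC -imsetD1; [apply: IH | apply: val_inj].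
- apply: awf_bob => [|_ [/imsetP [u uX ->] conn_u]].
    by case/set0Pn: X0 => x xX; apply/set0Pn; exists (val x); apply: imset_f.
  rewrite -imsetD1; last exact: val_inj.
  apply: IH => //; split => //; apply/connected_set_val.
  by rewrite imsetD1 //; apply: val_inj.
Qed.

End InducedSubgame.

Section AliceStrategy.

Hypothesis bipartite_win : forall (T : finType) (adj : rel T) (w : T -> nat),
  simple_graph adj -> connected_graph adj -> bipartite adj ->
  ~~ odd #|T| -> (forall v, w v <= 1) -> alice_wins adj w.

Variables (T : finType) (adj : rel T) (w : T -> nat).
Hypotheses (adj_simple : simple_graph adj) (no_corona : ~ has_induced_odd_corona adj).
Hypothesis w01 : forall v, w v <= 1.

Lemma alice_wins_bipartite_position S a :
  connected_set adj S -> ~~ odd #|S| -> bipartite_set adj S ->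
  \sum_(x | x \notin S) w x <= 2 * a -> alice_wins_from adj w S true a.
Proof.
move=> connS evenS [f f_bip] outside_a.
rewrite -(imset_val_setT S) -[a]add0n; apply: alice_wins_from_val outside_a.
have [adj_sym adj_irr] := adj_simple.
apply: bipartite_win => //; first by split=> [x y | x]; [apply: adj_sym | apply: adj_irr].
- by apply/connected_set_val; rewrite imset_val_setT.
- by exists (f \o val) => x y; apply: f_bip; apply: valP.
- by rewrite card_sig.
by move=> x; apply: w01.
Qed.

Lemma alice_wins_position S a :
  connected_set adj S -> ~~ odd #|S| ->
  \sum_(x | x \notin S) w x <= 2 * a -> alice_wins_from adj w S true a.
Proof.
have [n] := ubnP #|S|; elim: n => // n IHn in S a *.
rewrite ltnS => leSn connS evenS outside_a.
have [S0 | S_ne0] := eqVneq S set0.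
  rewrite S0 in outside_a *; apply: awf_end.
  by rewrite (eq_bigl (fun x => x \notin set0)) // => x; rewrite inE.
have [bipS | not_bipS] := classic (bipartite_set adj S).
  exact: alice_wins_bipartite_position.
have [v [[vS conn_v] greedy_v]] := greedy_legal_move adj_simple connS no_corona not_bipS w01.
apply: (awf_alice (v := v)) => //; have card_v := cardsD1 v S; rewrite vS in card_v.
apply: awf_bob => [|u [uSv conn_u]].
  by apply: contraTneq evenS => Sv0; rewrite card_v Sv0 cards0.
have card_u := cardsD1 u (S :\ v); rewrite uSv in card_u.
have uS : u \in S by case/setD1P: uSv.
apply: IHn => //; first lia.
  by move: evenS; rewrite card_v card_u /= negbK.
have := greedy_v u (conj uSv conn_u).
rewrite sum_notin_setD1 // sum_notin_setD1 //; lia.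
Qed.

End AliceStrategy.

Theorem mainTheorem1 :
  (forall (T : finType) (adj : rel T) (w : T -> nat),
     simple_graph adj -> connected_graph adj -> bipartite adj ->
     ~~ odd #|T| -> (forall v, w v <= 1) -> alice_wins adj w) ->
  forall (T : finType) (adj : rel T) (w : T -> nat),
    simple_graph adj -> connected_graph adj -> ~~ odd #|T| ->
    ~ has_induced_odd_corona adj -> (forall v, w v <= 1) ->
    alice_wins adj w.
Proof.
move=> bipartite_win T adj w adj_simple connG evenT no_corona w01.
apply: alice_wins_position; rewrite ?cardsT //.
by rewrite (eq_bigl xpred0) ?big_pred0 // => x; rewrite inE.
Qed.
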